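(* Let $A$ be a normed PI-algebra over $F\in\{\mathbb{R},\mathbb{C}\}$. If its completion $C(A)$ is nil, then $A$ is nilpotent.
   Context: All algebras are non-unitary associative over $F$. A normed algebra has a norm with $\|ab\|\le\|a\|\|b\|$; $C(A)$ is its completion as a Banach algebra. $A$ is a PI-algebra if it satisfies a nonzero polynomial identity, i.e. there is a nonzero $f(x_1,\dots,x_m)$ in the free non-unitary associative algebra $F\langle x_1,x_2,\dots\rangle$ with $f(a_1,\dots,a_m)=0$ for all $a_i\in A$. An algebra is nil if every element is nilpotent, and nilpotent if there is $n$ with $a_1a_2\cdots a_n=0$ for all $a_1,\dots,a_n$ in it. *)

From HB Require Import structures.
From mathcomp Require Import all_boot all_order all_algebra.
From mathcomp Require Import all_classical all_reals all_analysis.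
From mathcomp Require Import complex.
Set Implicit Arguments. Unset Strict Implicit. Unset Printing Implicit Defensive.
Import Order.TTheory GRing.Theory Num.Theory.
Import numFieldNormedType.Exports.
Local Open Scope ring_scope.
Local Open Scope classical_set_scope.

Definition scalarF (R : realType) (is_complex : bool) : numFieldType :=
  if is_complex then ((R[i])%C : numFieldType) else (R : numFieldType).

Section Alg.
Variables (K : numFieldType) (A : normedModType K).

(* Product of a nonempty list a_1 ... a_n (left-associated; the empty list is
   sent to 0, but is never used). *)
Definition nprod (mul : A -> A -> A) (s : seq A) : A :=
  if s is x :: t then foldl mul x t else 0.

(* x^(n+1) for a non-unital multiplication *)
Definition npow (mul : A -> A -> A) (x : A) (n : nat) : A := iter n (mul x) x.

Definition is_normed_algebra (mul : A -> A -> A) : Prop :=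
  [/\ (forall (k : K) x y z, mul (k *: x + y) z = k *: mul x z + mul y z),
      (forall (k : K) x y z, mul x (k *: y + z) = k *: mul x y + mul x z),
      (forall x y z, mul x (mul y z) = mul (mul x y) z) &
      (forall x y, `|mul x y| <= `|x| * `|y|)].

Definition is_nil (mul : A -> A -> A) : Prop :=
  forall x : A, exists n : nat, npow mul x n = 0.

Definition is_nilpotent (mul : A -> A -> A) : Prop :=
  exists n : nat, forall s : seq A, size s = n.+1 -> nprod mul s = 0.

(* An element of the free non-unital associative algebra K<x_0, x_1, ...> is
   represented canonically by a finite list of pairs (w, c) of pairwise
   distinct nonempty words w (sequences of variable indices) with coefficients
   c; it is the formal sum of the c * w. *)
Definition eval_word (mul : A -> A -> A) (a : nat -> A) (w : seq nat) : A :=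
  nprod mul (map a w).

Definition eval_ncpoly (mul : A -> A -> A) (f : seq (seq nat * K)) (a : nat -> A)
  : A := \sum_(t <- f) t.2 *: eval_word mul a t.1.

Definition is_ncpoly (f : seq (seq nat * K)) : Prop :=
  uniq (map fst f) /\ all (fun t => t.1 != [::]) f.

Definition ncpoly_nonzero (f : seq (seq nat * K)) : Prop :=
  has (fun t => t.2 != 0) f.

Definition is_PI (mul : A -> A -> A) : Prop :=
  exists f : seq (seq nat * K), [/\ is_ncpoly f, ncpoly_nonzero f &
    forall a : nat -> A, eval_ncpoly mul f a = 0].

End Alg.

Definition is_completion (K : numFieldType) (A : normedModType K)
  (B : completeNormedModType K) (mulA : A -> A -> A) (mulB : B -> B -> B)
  (j : A -> B) : Prop :=
  [/\ (forall (k : K) x y, j (k *: x + y) = k *: j x + j y),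
      (forall x y, j (mulA x y) = mulB (j x) (j y)),
      (forall x, `|j x| = `|x|) &
      closure (range j) = setT].

(* By the Baire category theorem a nil Banach
   algebra has bounded index: the closed sets {x | x^(m+1) = 0} cover it, so one
   of them contains a ball, and expanding (a + t b)^(m+1) as a polynomial in t
   with enough roots shows b^(m+1) = 0 for every b.  The isometric embedding
   carries this identity to A, and by the Nagata-Higman theorem (in
   characteristic 0) an algebra satisfying x^(p+1) = 0 is nilpotent of index at
   most 2^(p+1) - 1. *)

From HB Require Import structures.
From mathcomp Require Import all_boot all_order all_algebra.
From mathcomp Require Import all_classical all_reals all_analysis.
From mathcomp Require Import ring complex.
Import Order.TTheory GRing.Theory Num.Theory.
Import numFieldNormedType.Exports.
Local Open Scope ring_scope.
Local Open Scope classical_set_scope.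
Set Implicit Arguments. Unset Strict Implicit. Unset Printing Implicit Defensive.

Lemma vandermonde_coef_comb (K : fieldType) (V : lmodType K) n
    (t : 'I_n.+1 -> K) (c : 'I_n.+1 -> V) : injective t ->
  forall k, exists w : 'I_n.+1 -> K,
    c k = \sum_i w i *: \sum_(l < n.+1) t i ^+ l *: c l.
Proof.
move=> tinj k; pose M : 'M[K]_n.+1 := \matrix_(l, i) t i ^+ l.
have uM : M \in unitmx.
  have -> : M = Vandermonde n.+1 (\row_i t i) by apply/matrixP => l i; rewrite !mxE.
  rewrite unitmxE unitfE det_Vandermonde; apply/prodf_neq0 => i _.
  apply/prodf_neq0 => j ij; rewrite !mxE subr_eq0; apply: contraTneq ij.
  by move=> /tinj ->; rewrite ltnn.
exists (fun i => invmx M i k).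
under eq_bigr do rewrite scaler_sumr.
rewrite exchange_big /=.
have comb (l : 'I_n.+1) :
    \sum_i invmx M i k *: (t i ^+ l *: c l) = (M *m invmx M) l k *: c l.
  by rewrite mxE scaler_suml; apply: eq_bigr => i _; rewrite scalerA mxE mulrC.
under eq_bigr do rewrite comb.
rewrite mulmxV // (bigD1 k) //= mxE eqxx mulr1n scale1r big1 ?addr0 //.
by move=> l /negbTE hl; rewrite mxE hl mulr0n scale0r.
Qed.

Definition nh_bound p : nat := (2 ^ p.+1)%N.-1.

Lemma nh_bound_gt0 p : (0 < nh_bound p)%N.
Proof.
have : (0 < 2 ^ p)%N by rewrite expn_gt0.
by rewrite /nh_bound expnS mul2n; case: (2 ^ p)%N => // m _; rewrite doubleS.
Qed.

Lemma nh_boundS p : nh_bound p.+1 = (nh_bound p).*2.+1.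
Proof.
have : (0 < 2 ^ p.+1)%N by rewrite expn_gt0.
by rewrite /nh_bound [in LHS]expnS mul2n; case: (2 ^ p.+1)%N => // m _; rewrite doubleS.
Qed.

Section NonUnitalAlgebra.
Variables (K : numFieldType) (V : normedModType K) (mul : V -> V -> V).
Hypotheses
  (mul_linear_l : forall (k : K) x y z, mul (k *: x + y) z = k *: mul x z + mul y z)
  (mul_linear_r : forall (k : K) x y z, mul x (k *: y + z) = k *: mul x y + mul x z)
  (mul_assoc : forall x y z, mul x (mul y z) = mul (mul x y) z).

Local Notation "x ** y" := (mul x y) (at level 40, left associativity).
Local Notation np := (npow mul).

Lemma mul0v z : 0 ** z = 0.
Proof.
by have := mul_linear_l (-1) z z z; rewrite scaleN1r addNr => ->; rewrite scaleN1r addNr.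
Qed.

Lemma mulv0 z : z ** 0 = 0.
Proof.
by have := mul_linear_r (-1) z z z; rewrite scaleN1r addNr => ->; rewrite scaleN1r addNr.
Qed.

Lemma mulvDl x y z : (x + y) ** z = x ** z + y ** z.
Proof. by have := mul_linear_l 1 x y z; rewrite !scale1r. Qed.

Lemma mulvDr x y z : z ** (x + y) = z ** x + z ** y.
Proof. by have := mul_linear_r 1 z x y; rewrite !scale1r. Qed.

Lemma mulvZl k x z : (k *: x) ** z = k *: (x ** z).
Proof. by have := mul_linear_l k x 0 z; rewrite !addr0 mul0v addr0. Qed.

Lemma mulvZr k x z : z ** (k *: x) = k *: (z ** x).
Proof. by have := mul_linear_r k z x 0; rewrite !addr0 mulv0 addr0. Qed.

Lemma mulvBl x u v : (u - v) ** x = u ** x - v ** x.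
Proof. by rewrite -scaleN1r addrC mul_linear_l scaleN1r addrC. Qed.

Lemma mulvBr x u v : x ** (u - v) = x ** u - x ** v.
Proof. by rewrite -scaleN1r addrC mul_linear_r scaleN1r addrC. Qed.

Lemma mulv_suml I (r : seq I) (P : pred I) (F : I -> V) z :
  (\sum_(i <- r | P i) F i) ** z = \sum_(i <- r | P i) F i ** z.
Proof. exact: (big_morph (mul^~ z) (fun a b => mulvDl a b z) (mul0v z)). Qed.

Lemma mulv_sumr I (r : seq I) (P : pred I) (F : I -> V) z :
  z ** (\sum_(i <- r | P i) F i) = \sum_(i <- r | P i) z ** F i.
Proof. exact: (big_morph (mul z) (fun a b => mulvDr a b z) (mulv0 z)). Qed.

(* [lpow x i w] and [rpow w y i] stand for x^i w and w y^i, which make sense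
   for i = 0 in the absence of a unit. *)
Definition lpow x i w := iter i (mul x) w.
Definition rpow w y i := iter i (mul^~ y) w.

Lemma lpow_sum x i I (r : seq I) (P : pred I) (F : I -> V) :
  lpow x i (\sum_(j <- r | P j) F j) = \sum_(j <- r | P j) lpow x i (F j).
Proof. by elim: i => //= i ->; rewrite mulv_sumr. Qed.

Lemma rpow_sum y i I (r : seq I) (P : pred I) (F : I -> V) :
  rpow (\sum_(j <- r | P j) F j) y i = \sum_(j <- r | P j) rpow (F j) y i.
Proof. by elim: i => //= i ->; rewrite mulv_suml. Qed.

Lemma lpowZ x i k u : lpow x i (k *: u) = k *: lpow x i u.
Proof. by elim: i => //= i ->; rewrite mulvZr. Qed.

Lemma npowS x i : np x i.+1 = x ** np x i.
Proof. by []. Qed.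

Lemma npowSr x i : np x i.+1 = np x i ** x.
Proof. by elim: i => [//|i IH]; rewrite npowS [in LHS]IH mul_assoc. Qed.

Lemma lpow_npow x i w : lpow x i.+1 w = np x i ** w.
Proof. by elim: i => // i IH; rewrite -[LHS]/(x ** lpow x i.+1 w) IH mul_assoc. Qed.

Lemma rpow_npow w y i : rpow w y i.+1 = w ** np y i.
Proof.
by elim: i => // i IH; rewrite -[LHS]/(rpow w y i.+1 ** y) IH -mul_assoc -npowSr.
Qed.

Lemma rpowD w y i k : rpow (rpow w y k) y i = rpow w y (i + k).
Proof. by rewrite /rpow iterD. Qed.

Lemma mulv_rpow u w y j : u ** rpow w y j = rpow (u ** w) y j.
Proof. by elim: j => //= j IH; rewrite mul_assoc -IH. Qed.

Lemma lpow_rpow x i y j w : lpow x i (rpow w y j) = rpow (lpow x i w) y j.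
Proof. by elim: i => //= i IH; rewrite -/(lpow x i _) IH mulv_rpow. Qed.

Lemma rpow_mulv z y j v : rpow z y j ** v = z ** lpow y j v.
Proof.
elim: j v => // j IH v.
by rewrite -[rpow z y j.+1]/(rpow z y j ** y) -mul_assoc IH /lpow iterSr.
Qed.

Definition linpow n x w := \sum_(i < n) lpow x i (rpow w x (n.-1 - i)).

Lemma linpowS n x w : linpow n.+1 x w = rpow w x n + x ** linpow n x w.
Proof.
rewrite /linpow big_ord_recl /= subn0 mulv_sumr; congr (_ + _).
apply: eq_bigr => i _; rewrite /bump /= add1n /=.
by case: n i => [[]//|n] i; rewrite subSS.
Qed.

(* [pcoef x y m k] is the coefficient of t^k in (x + t y)^(m+1). *)
Fixpoint pcoef x y m k : V :=
  if m is m'.+1 then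
    x ** pcoef x y m' k + (if k is k'.+1 then y ** pcoef x y m' k' else 0)
  else match k with 0 => x | 1 => y | _ => 0 end.

Lemma pcoef_gt x y m k : (m.+1 < k)%N -> pcoef x y m k = 0.
Proof.
elim: m k => [|m IH] [|k] //= hk; first by case: k hk.
by rewrite !IH ?mulv0 ?addr0 // ltnW.
Qed.

Lemma pcoef0 x y m : pcoef x y m 0 = np x m.
Proof. by elim: m => [//|m IH] /=; rewrite addr0 IH. Qed.

Lemma pcoef1 x y m : pcoef x y m 1 = linpow m.+1 x y.
Proof.
elim: m => [|m IH]; first by rewrite linpowS /linpow big_ord0 mulv0 addr0.
by rewrite [LHS]/= IH pcoef0 (linpowS m.+1) rpow_npow addrC.
Qed.

Lemma pcoef_top x y m : pcoef x y m m.+1 = np y m.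
Proof. by elim: m => [//|m IH] /=; rewrite pcoef_gt // mulv0 add0r IH. Qed.

Lemma npow_addZ x y (t : K) m :
  np (x + t *: y) m = \sum_(l < m.+2) t ^+ l *: pcoef x y m l.
Proof.
elim: m => [|m IH].
  by rewrite !big_ord_recl big_ord0 /= expr0 scale1r expr1 addr0.
rewrite npowS IH mulvDl mulvZl !mulv_sumr.
under [RHS]eq_bigr do rewrite [pcoef _ _ _ _]/= scalerDr.
rewrite big_split /=; congr (_ + _).
  rewrite [RHS]big_ord_recr /= pcoef_gt // mulv0 scaler0 addr0.
  by apply: eq_bigr => l _; rewrite mulvZr.
rewrite [RHS]big_ord_recl /= scaler0 add0r scaler_sumr.
by apply: eq_bigr => l _; rewrite mulvZr scalerA exprS.
Qed.

Record ideal (I : V -> Prop) : Prop := Ideal {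
  ideal0 : I 0;
  idealD : forall u v, I u -> I v -> I (u + v);
  idealZ : forall k u, I u -> I (k *: u);
  ideal_mull : forall u w, I u -> I (w ** u);
  ideal_mulr : forall u w, I u -> I (u ** w) }.

Lemma ideal_eq0 : ideal (eq^~ 0).
Proof.
split=> //.
- by move=> u v -> ->; rewrite addr0.
- by move=> k u ->; rewrite scaler0.
- by move=> u w ->; rewrite mulv0.
- by move=> u w ->; rewrite mul0v.
Qed.

Section Ideal.
Variables (I : V -> Prop) (idealI : ideal I).

Lemma ideal_sum J (r : seq J) (P : pred J) (F : J -> V) :
  (forall j, P j -> I (F j)) -> I (\sum_(j <- r | P j) F j).
Proof. by move=> IF; apply: big_ind => //; [apply: ideal0 | apply: idealD]. Qed.

Lemma ideal_lpow x i u : I u -> I (lpow x i u).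
Proof. by move=> Iu; elim: i => //= i IH; apply: (ideal_mull idealI). Qed.

Lemma ideal_rpow y i u : I u -> I (rpow u y i).
Proof. by move=> Iu; elim: i => //= i IH; apply: (ideal_mulr idealI). Qed.

(* Summing the identities [linpow n x (z y^j) y^(n-1-j)] over j, the terms
   x^i (...) with i < n - 1 regroup as [z (linpow n y x^(n-1-i))], and what
   remains is n x^(n-1) z y^(n-1). *)
Lemma higman p : (forall x w, I (linpow p.+2 x w)) ->
  forall x z y, I (np x p ** z ** np y p).
Proof.
move=> Ilin x z y; set n := p.+2.
pose G i := \sum_(j < n) rpow (rpow (rpow z y j) x (n.-1 - i)) y (n.-1 - j).
pose S := \sum_(j < n) rpow (linpow n x (rpow z y j)) y (n.-1 - j).
have IS : I S by apply: ideal_sum => j _; apply: ideal_rpow.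
have S_lpow : S = \sum_(i < n) lpow x i (G i).
  rewrite /S /linpow; under eq_bigr do rewrite rpow_sum.
  rewrite exchange_big /=; apply: eq_bigr => i _.
  by rewrite lpow_sum; apply: eq_bigr => j _; rewrite [RHS]lpow_rpow.
have G_lin (i : nat) : (i < n.-1)%N -> G i = z ** linpow n y (np x (n.-1 - i).-1).
  move=> lti; rewrite /linpow mulv_sumr; apply: eq_bigr => j _.
  have -> : (n.-1 - i = (n.-1 - i).-1.+1)%N by rewrite prednK // subn_gt0.
  by rewrite rpow_npow rpow_mulv -mulv_rpow -lpow_rpow.
have G_last : G n.-1 = n%:R *: rpow z y n.-1.
  have e (j : 'I_n) : (n.-1 - j + j = n.-1)%N by rewrite subnK // -ltnS.
  rewrite /G subnn; under eq_bigr => j _ do rewrite -[rpow _ x 0]/(rpow z y j) rpowD e.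
  by rewrite sumr_const card_ord scaler_nat.
have Ifirst : I (\sum_(i < n.-1) lpow x i (G i)).
  apply: ideal_sum => i _; apply: ideal_lpow.
  by rewrite G_lin //; apply: (ideal_mull idealI); apply: Ilin.
have Ilast : I (n%:R *: lpow x n.-1 (rpow z y n.-1)).
  have -> : n%:R *: lpow x n.-1 (rpow z y n.-1) =
      (-1) *: (\sum_(i < n.-1) lpow x i (G i)) + S.
    by rewrite S_lpow [X in _ + X]big_ord_recr G_last lpowZ addrA scaleN1r addNr add0r.
  by apply: (idealD idealI) => //; apply: (idealZ idealI).
have := idealZ idealI (n%:R)^-1 Ilast.
by rewrite scalerA mulVf ?pnatr_eq0 // scale1r lpow_npow rpow_npow mul_assoc.
Qed.

Lemma ideal_vandermonde n (t : 'I_n.+1 -> K) (c : 'I_n.+1 -> V) : injective t ->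
  (forall i, I (\sum_(l < n.+1) t i ^+ l *: c l)) -> forall k, I (c k).
Proof.
move=> tinj Isum k; have [w ->] := vandermonde_coef_comb c tinj k.
by apply: ideal_sum => i _; apply: (idealZ idealI).
Qed.

Lemma ideal_linpow p : (forall z, I (np z p.+1)) -> forall x w, I (linpow p.+2 x w).
Proof.
move=> Inpow x w; rewrite -pcoef1.
pose t (i : 'I_p.+3) : K := i%:R.
have tinj : injective t by move=> i j /eqP; rewrite eqr_nat => /eqP /val_inj.
apply: (ideal_vandermonde (c := pcoef x w p.+1) tinj _ (@Ordinal p.+3 1 isT)).
by move=> i; rewrite -npow_addZ.
Qed.

End Ideal.

Lemma foldl_mulv a y s : foldl mul a (y :: s) = a ** foldl mul y s.
Proof.
elim: s a y => [//|u s IH] a y /=.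
by have := IH (a ** y) u; have := IH y u; rewrite /= => -> ->; rewrite mul_assoc.
Qed.

Lemma nprod_cat_cons s1 z s2 : s1 != [::] -> s2 != [::] ->
  nprod mul (s1 ++ z :: s2) = nprod mul s1 ** z ** nprod mul s2.
Proof.
case: s1 => // a t1; case: s2 => // b t2 _ _ /=.
by rewrite foldl_cat foldl_mulv foldl_mulv mul_assoc.
Qed.

(* A product of length 2L + 1 is u z v with u, v of length L.  The induction
   hypothesis is applied first to the ideal J of the u with u z y^(p+1) in I for
   all z, y (Higman's lemma provides its (p+1)-th powers), then to the ideal J'
   of the v with u z v in I for all products u of length L. *)
Theorem nagata_higman p (I : V -> Prop) : ideal I -> (forall z, I (np z p)) ->
  forall s, size s = nh_bound p -> I (nprod mul s).
Proof.
elim: p I => [|p IH] I idealI Inpow s.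
  by case: s => [|a [|]] // _; apply: Inpow.
have [I0 ID IZ IL IR] := idealI.
pose J u := forall z y, I (u ** z ** np y p).
have idealJ : ideal J.
  split.
  - by move=> z y; rewrite !mul0v.
  - by move=> u v Ju Jv z y; rewrite !mulvDl; apply: ID.
  - by move=> k u Ju z y; rewrite !mulvZl; apply: IZ.
  - by move=> u w Ju z y; rewrite -!mul_assoc; apply: IL; rewrite mul_assoc.
  - by move=> u w Ju z y; rewrite -(mul_assoc u w z); apply: Ju.
have Jnpow z : J (np z p).
  by move=> z' y; apply: (higman idealI); apply: (ideal_linpow idealI).
pose J' v := forall s z, size s = nh_bound p -> I (nprod mul s ** z ** v).
have idealJ' : ideal J'.
  split.
  - by move=> s' z _; rewrite mulv0.
  - by move=> u v Ju Jv s' z hs'; rewrite mulvDr; apply: ID; [apply: Ju | apply: Jv].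
  - by move=> k u Ju s' z hs'; rewrite mulvZr; apply: IZ; apply: Ju.
  - by move=> u w Ju s' z hs'; rewrite mul_assoc -(mul_assoc _ z w); apply: Ju.
  - by move=> u w Ju s' z hs'; rewrite mul_assoc; apply: IR; apply: Ju.
have J'npow y : J' (np y p) by move=> s' z hs'; apply: (IH J idealJ).
move: s; rewrite nh_boundS => s hs.
have s1_size : size (take (nh_bound p) s) = nh_bound p.
  by rewrite size_takel // hs -addnn -addSn leq_addl.
case s2_def : (drop (nh_bound p) s) => [|z s2].
  by move: (size_drop (nh_bound p) s); rewrite s2_def hs -addnn -addSn addnK.
have s2_size : size s2 = nh_bound p.
  by move: (size_drop (nh_bound p) s); rewrite s2_def hs -addnn -addSn addnK => -[].
have L_gt0 := nh_bound_gt0 p.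
rewrite -(cat_take_drop (nh_bound p) s) s2_def nprod_cat_cons.
- by apply: (IH J').
- by rewrite -size_eq0 s1_size -lt0n.
- by rewrite -size_eq0 s2_size -lt0n.
Qed.

Hypothesis mul_norm : forall x y, `|x ** y| <= `|x| * `|y|.

Lemma norm_npow_le b m : `|np b m| <= (`|b| + 1) ^+ m.+1.
Proof.
elim: m => [|m IH]; first by rewrite expr1 lerDl.
rewrite npowS exprS; apply: (le_trans (mul_norm _ _)).
by apply: ler_pM => //; rewrite lerDl.
Qed.

Lemma norm_npowB_le x b m : `|x - b| <= 1 ->
  `|np x m - np b m| <= `|x - b| * (m.+1%:R * (`|b| + 1) ^+ m).
Proof.
move=> xb_le1; set d := `|x - b|; set c := `|b| + 1.
have x_le : `|x| <= c.
  by rewrite -[x](subrK b) addrC; apply: (le_trans (ler_normD _ _)); rewrite lerD2l.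
elim: m => [|m IH]; first by rewrite expr0 !mulr1.
have -> : np x m.+1 - np b m.+1 = x ** (np x m - np b m) + (x - b) ** np b m.
  by rewrite !npowS mulvBr mulvBl addrA subrK.
apply: (le_trans (ler_normD _ _)).
apply: (le_trans (lerD (mul_norm _ _) (mul_norm _ _))).
have c_ge0 : 0 <= c by rewrite addr_ge0.
have h1 : `|x| * `|np x m - np b m| <= c * (d * (m.+1%:R * c ^+ m)) by apply: ler_pM.
have h2 : `|x - b| * `|np b m| <= d * c ^+ m.+1.
  by apply: ler_pM => //; apply: norm_npow_le.
apply: (le_trans (lerD h1 h2)); rewrite exprS -[m.+2]addn1 natrD.
by rewrite le_eqVlt; apply/orP; left; apply/eqP; ring.
Qed.

Lemma npow_neq0_near b m : np b m != 0 ->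
  exists2 s, 0 < s & forall x, `|x - b| < s -> np x m != 0.
Proof.
move=> npow_neq0; set c := `|np b m|; set C := m.+1%:R * (`|b| + 1) ^+ m.
have c_gt0 : 0 < c by rewrite normr_gt0.
have C_gt0 : 0 < C by rewrite mulr_gt0 // exprn_gt0 // ltr_wpDl.
have Cc_gt0 : 0 < C + c by rewrite addr_gt0.
exists (c / (C + c)); first by rewrite divr_gt0.
move=> x xb_lt; apply/eqP => npow_x0.
have lt_c : `|x - b| * C < c.
  apply: (le_lt_trans (ler_wpM2r (ltW C_gt0) (ltW xb_lt))).
  by rewrite mulrAC ltr_pdivrMr // ltr_pM2l // ltrDl.
have xb_le1 : `|x - b| <= 1.
  by apply: (le_trans (ltW xb_lt)); rewrite ler_pdivrMr // mul1r lerDr ltW.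
have := norm_npowB_le m xb_le1; rewrite npow_x0 sub0r normrN -/c -/C.
by move=> /(lt_le_trans lt_c); rewrite ltxx.
Qed.

End NonUnitalAlgebra.

Section Baire.
Variables (K : numFieldType) (B : completeNormedModType K).
Hypothesis archK : forall e : K, 0 < e -> exists M : nat, (M.+1%:R)^-1 < e.

Lemma pos_lower_bound (a b : K) : 0 < a -> 0 < b -> exists2 c, 0 < c & c <= a /\ c <= b.
Proof.
move=> a_gt0 b_gt0.
by case: (real_leP (gtr0_real a_gt0) (gtr0_real b_gt0)) => [ab|/ltW ba];
  [exists a | exists b].
Qed.

Lemma exists_subball_avoid (D : B -> Prop) (e : K) :
  (forall b, ~ D b -> exists2 s, 0 < s & forall x, `|x - b| < s -> ~ D x) ->
  (forall a r, 0 < r -> exists2 x, `|x - a| < r & ~ D x) -> 0 < e ->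
  forall a r, 0 < r -> exists a' r', [/\ `|a' - a| < r / 2, 0 < r',
    r' <= r / 2, r' <= e & forall y, `|y - a'| < r' + r' -> ~ D y].
Proof.
move=> D_closed D_no_ball e_gt0 a r r_gt0.
have r2_gt0 : 0 < r / 2 by rewrite divr_gt0.
have [x xa_lt Dx] := D_no_ball a (r / 2) r2_gt0.
have [s s_gt0 hs] := D_closed x Dx.
have [c c_gt0 [cr ce]] := pos_lower_bound r2_gt0 e_gt0.
have [r' r'_gt0 [r'c r's]] := pos_lower_bound c_gt0 (divr_gt0 s_gt0 (ltr0Sn K 1)).
exists x, r'; split => //; first exact: le_trans r'c cr.
- exact: le_trans r'c ce.
- move=> y yx_lt; apply: hs; apply: (lt_le_trans yx_lt).
  by rewrite [leRHS](splitr s) lerD.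
Qed.

Theorem baire_closed_cover (C : nat -> B -> Prop) :
  (forall m b, ~ C m b -> exists2 s, 0 < s & forall x, `|x - b| < s -> ~ C m x) ->
  (forall b, exists m, C m b) ->
  exists m a r, 0 < r /\ forall x, `|x - a| < r -> C m x.
Proof.
move=> C_closed C_cover; apply: contrapT => no_ball.
have C_no_ball m a r : 0 < r -> exists2 x, `|x - a| < r & ~ C m x.
  move=> r_gt0; apply: contrapT => hnot; apply: no_ball; exists m, a, r.
  by split => // x xa; apply: contrapT => Cx; apply: hnot; exists x.
pose P (q : nat * (B * K)) (q' : B * K) :=
  0 < q.2.2 -> [/\ `|q'.1 - q.2.1| < q.2.2 / 2, 0 < q'.2, q'.2 <= q.2.2 / 2,
    q'.2 <= (q.1.+1%:R)^-1 & forall y, `|y - q'.1| < q'.2 + q'.2 -> ~ C q.1 y].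
have exP q : exists q', P q q'.
  case: q => m [a r]; case: (boolP (0 < r)) => [r_gt0|r_le0].
    have e_gt0 : 0 < (m.+1%:R : K)^-1 by rewrite invr_gt0.
    have [a' [r' ?]] := exists_subball_avoid (C_closed m) (C_no_ball m) e_gt0 a r_gt0.
    by exists (a', r').
  by exists (a, r) => /= r_gt0; move: r_le0; rewrite r_gt0.
have [f hf] := choice exP.
pose u := fix u m := if m is m'.+1 then f (m', u m') else ((0 : B), (1 : K)).
pose x m := (u m).1; pose r m := (u m).2.
have r_gt0 m : 0 < r m.
  by elim: m => [|m IH]; [rewrite /r /= | have [] := hf (m, u m) IH].
have step m : [/\ `|x m.+1 - x m| < r m / 2, r m.+1 <= r m / 2,
    r m.+1 <= (m.+1%:R)^-1 & forall y, `|y - x m.+1| < r m.+1 + r m.+1 -> ~ C m y].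
  by have [] := hf (m, u m) (r_gt0 m).
have chain m k : `|x (m + k)%N - x m| <= r m - r (m + k)%N.
  elim: k => [|k IH]; first by rewrite addn0 !subrr normr0.
  have [xx_lt rr_le _ _] := step (m + k)%N; rewrite addnS.
  have -> : x (m + k).+1 - x m = (x (m + k).+1 - x (m + k)%N) + (x (m + k)%N - x m).
    by rewrite addrA subrK.
  apply: (le_trans (ler_normD _ _)); apply: (le_trans (lerD (ltW xx_lt) IH)).
  by rewrite addrCA lerD2l {2}(splitr (r (m + k)%N)) opprD addrA subrr add0r lerN2.
have x_cauchy : cauchy_ex (x @ \oo).
  move=> e e_gt0; have [M hM] := archK e_gt0; exists (x M.+1), M.+1 => // n /= Mn.
  have [_ _ rM _] := step M.
  rewrite -ball_normE /= -(subnKC Mn) distrC.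
  apply: (le_lt_trans (chain _ _)); apply: lt_le_trans (ltW (le_lt_trans rM hM)).
  by rewrite ltrBlDr ltrDl.
have x_cvg : cvg (x @ \oo) by apply: cauchy_cvg; apply: cauchy_exP.
set l := lim (x @ \oo).
have [m Cml] := C_cover l.
have [N _ xN] := (cvgrPdist_lt _ _).1 x_cvg _ (r_gt0 m.+1).
have [_ _ _ step_avoid] := step m.
apply: (step_avoid l _ Cml); pose n := (m.+1 + N)%N.
have -> : l - x m.+1 = (l - x n) + (x n - x m.+1) by rewrite addrA subrK.
apply: (le_lt_trans (ler_normD _ _)); apply: ltr_leD.
  by apply: xN; rewrite /= leq_addl.
by apply: (le_trans (chain _ _)); rewrite lerBlDr lerDl ltW.
Qed.
End Baire.

Section NilBanachAlgebra.
Variables (K : numFieldType) (B : completeNormedModType K) (mul : B -> B -> B).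
Hypotheses
  (mul_linear_l : forall (k : K) x y z, mul (k *: x + y) z = k *: mul x z + mul y z)
  (mul_linear_r : forall (k : K) x y z, mul x (k *: y + z) = k *: mul x y + mul x z)
  (mul_norm : forall x y, `|mul x y| <= `|x| * `|y|)
  (archK : forall e : K, 0 < e -> exists M : nat, (M.+1%:R)^-1 < e).

Theorem nil_bounded_index : (forall x, exists n, npow mul x n = 0) ->
  exists m, forall b, npow mul b m = 0.
Proof.
move=> nilB.
have npow_closed m b : npow mul b m <> 0 ->
    exists2 s, 0 < s & forall x, `|x - b| < s -> npow mul x m <> 0.
  move=> /eqP /(npow_neq0_near mul_linear_l mul_linear_r mul_norm) [s s_gt0 hs].
  by exists s => // x /hs /eqP.
have [m [a [r [r_gt0 ball_nil]]]] :=
  baire_closed_cover archK (C := fun m b => npow mul b m = 0) npow_closed nilB.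
exists m => b; set c := `|b| + 1.
have c_gt0 : 0 < c by rewrite ltr_wpDl.
have mc_gt0 : 0 < m.+2%:R * c by rewrite mulr_gt0.
set e := r / (m.+2%:R * c).
have e_gt0 : 0 < e by rewrite divr_gt0.
pose t (i : 'I_m.+2) : K := e * i.+1%:R.
have tinj : injective t.
  by move=> i j /(mulfI (lt0r_neq0 e_gt0)) /eqP; rewrite eqr_nat eqSS => /eqP /val_inj.
have t_small i : `|t i *: b| < r.
  have t_ge0 : 0 <= t i by rewrite mulr_ge0 // ltW.
  rewrite normrZ ger0_norm // /t -mulrA /e mulrAC ltr_pdivrMr // ltr_pM2l //.
  apply: (le_lt_trans (y := m.+2%:R * `|b|)); first by rewrite ler_wpM2r // ler_nat.
  by rewrite ltr_pM2l // ltrDl.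
rewrite -(pcoef_top mul_linear_r a b m).
apply: (ideal_vandermonde (ideal_eq0 mul_linear_l mul_linear_r)
  (c := pcoef mul a b m) tinj _ ord_max) => i.
by rewrite -npow_addZ //; apply: ball_nil; rewrite addrAC subrr add0r.
Qed.

End NilBanachAlgebra.

Lemma realType_archimedean (R : realType) (e : R) :
  0 < e -> exists M : nat, (M.+1%:R)^-1 < e.
Proof.
move=> e_gt0; exists (Num.truncn e^-1).
by rewrite -ltf_pV2 ?posrE ?ltr0Sn ?invr_gt0 // invrK truncnS_gt.
Qed.

Lemma scalarF_archimedean (R : realType) (b : bool) (e : scalarF R b) :
  0 < e -> exists M : nat, (M.+1%:R)^-1 < e.
Proof.
case: b e => [[a c]|e]; last exact: realType_archimedean.
rewrite /= ltcE /= => /andP [/eqP -> a_gt0].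
have [M hM] := realType_archimedean a_gt0; exists M.
have -> : (M.+1%:R : R[i]%C)^-1 = ((M.+1%:R : R)^-1)%:C%C by rewrite fmorphV rmorph_nat.
by rewrite complexr0 ltcR.
Qed.

Lemma npow_morph (K : numFieldType) (A B : normedModType K)
  (mulA : A -> A -> A) (mulB : B -> B -> B) (j : A -> B) :
  (forall x y, j (mulA x y) = mulB (j x) (j y)) ->
  forall z p, j (npow mulA z p) = npow mulB (j z) p.
Proof. by move=> j_mul z; elim=> [//|p IH]; rewrite /= j_mul -/(npow _ _ _) IH. Qed.

Unset Implicit Arguments.
Theorem corollary1p5 (R : realType) (is_complex : bool)
  (A : normedModType (scalarF R is_complex)) (mulA : A -> A -> A)
  (B : completeNormedModType (scalarF R is_complex)) (mulB : B -> B -> B)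
  (j : A -> B) :
  is_normed_algebra mulA -> is_PI mulA ->
  is_normed_algebra mulB -> is_completion mulA mulB j ->
  is_nil mulB -> is_nilpotent mulA.
Proof.
move=> [mulA_l mulA_r mulA_assoc _] _ [mulB_l mulB_r _ mulB_norm].
move=> [_ j_mul j_norm _] nilB.
have [p npowB0] := nil_bounded_index mulB_l mulB_r mulB_norm
  (@scalarF_archimedean R is_complex) nilB.
have npowA0 z : npow mulA z p = 0.
  by apply/eqP; rewrite -normr_eq0 -j_norm (npow_morph j_mul) npowB0 normr0.
exists (nh_bound p).-1 => s; rewrite prednK ?nh_bound_gt0 //.
by apply: (nagata_higman mulA_l mulA_r mulA_assoc (ideal_eq0 mulA_l mulA_r)).
Qed.
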